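(* Let $S=S(\lambda_1,\ldots,\lambda_d)$ be a spider with $n=1+\lambda_1+\cdots+\lambda_d$ vertices, and suppose $n=mq$ for positive integers $m,q$ with $m>1$. If $S$ has a connected partition of type $(m^q)$, then $$[e_{(m^q)}]X_S=m(m-1)^{q-1}.$$
   Context: A spider $S(\lambda_1,\ldots,\lambda_d)$, for positive integers $\lambda_1,\ldots,\lambda_d$, is the tree consisting of a vertex $v$ (the center) together with $d$ vertex-disjoint paths (legs) having $\lambda_1,\ldots,\lambda_d$ vertices respectively, where $v$ is joined by an edge to one endpoint of each leg. A connected partition of a graph $G=(V,E)$ is a partition of $V$ into blocks each inducing a connected subgraph; its type is the integer partition of $|V|$ formed by the block sizes; $(m^q)$ is the partition with $q$ parts equal to $m$. The chromatic symmetric function of $G$ is $X_G=\sum_\kappa \prod_{v} x_{\kappa(v)}$ over proper colorings $\kappa$, and $[e_\mu]X_G$ denotes the coefficient of $e_\mu$ in the expansion of $X_G$ in elementary symmetric functions. *)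

From HB Require Import structures.
From mathcomp Require Import all_boot all_order all_algebra.
From mathcomp Require Import mpoly.
Set Implicit Arguments. Unset Strict Implicit. Unset Printing Implicit Defensive.
Import Order.TTheory GRing.Theory Num.Theory.

(* Vertices of S(lam_0,...,lam_{d-1}): None = center; Some (j, k) = the k-th
   vertex (0-based, k < lam j) of leg j, vertex k = 0 being joined to the center. *)
Definition spider_vert (d : nat) (lam : 'I_d -> nat) : finType :=
  option {j : 'I_d & 'I_(lam j)}.

Definition spider_adj0 (d : nat) (lam : 'I_d -> nat)
    (x y : spider_vert lam) : bool :=
  match x, y with
  | None, Some (existT _ k) => val k == 0
  | Some (existT j k), Some (existT j' k') => (j == j') && (val k' == (val k).+1)
  | _, _ => false
  end.

Definition spider_adj (d : nat) (lam : 'I_d -> nat) : rel (spider_vert lam) :=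
  fun x y => spider_adj0 x y || spider_adj0 y x.

Definition induces_connected (V : finType) (adj : rel V) (B : {set V}) : bool :=
  [forall x in B, forall y in B,
     connect [rel u v | [&& adj u v, u \in B & v \in B]] x y].

Definition connected_partition_of_type_mq (V : finType) (adj : rel V)
    (m q : nat) (P : {set {set V}}) : Prop :=
  [/\ partition P [set: V],
      (forall B, B \in P -> induces_connected adj B),
      (forall B, B \in P -> #|B| = m) &
      #|P| = q].

(* X_G in N = |V| variables x_0..x_{N-1}; with N >= |V| this truncation is
   injective on homogeneous symmetric functions of degree |V|, so all
   e-coefficients are determined by it. *)
Definition proper_coloring (V : finType) (adj : rel V) (N : nat)
    (k : {ffun V -> 'I_N}) : bool :=
  [forall x, forall y, adj x y ==> (k x != k y)].

Definition chrom_sym (V : finType) (adj : rel V) : {mpoly int[#|V|]} :=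
  \sum_(k : {ffun V -> 'I_#|V|} | proper_coloring adj k) \prod_(v : V) 'X_(k v).

(* An integer partition of n is encoded as a nonincreasing n-tuple of parts
   (parts in 0..n), padded with zeros, whose parts sum to n. *)
Definition is_ipart (n : nat) (mu : {ffun 'I_n -> 'I_n.+1}) : bool :=
  [forall i : 'I_n, forall j : 'I_n, (i <= j)%N ==> (mu j <= mu i)%N]
  && (\sum_(i < n) (mu i : nat) == n)%N.

Definition e_basis (n : nat) (mu : {ffun 'I_n -> 'I_n.+1}) : {mpoly int[n]} :=
  \prod_(i < n) mesym n int (mu i).

Definition part_mq (n m q : nat) : {ffun 'I_n -> 'I_n.+1} :=
  [ffun i : 'I_n => if (i < q)%N then inord m else ord0].

Definition e_coeff_is (n : nat) (X : {mpoly int[n]})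
    (mu : {ffun 'I_n -> 'I_n.+1}) (c : int) : Prop :=
  (exists a : {ffun 'I_n -> 'I_n.+1} -> int,
      X = (\sum_(nu | is_ipart nu) a nu *: e_basis nu)%R) /\
  (forall a : {ffun 'I_n -> 'I_n.+1} -> int,
      X = (\sum_(nu | is_ipart nu) a nu *: e_basis nu)%R -> a mu = c).

From HB Require Import structures.
From mathcomp Require Import all_boot all_order all_algebra.
From mathcomp Require Import mpoly.
From mathcomp Require Import zify ring.
From mathcomp Require Import algC cyclotomic.
From mathcomp Require Import fingroup perm.
Import Order.TTheory GRing.Theory Num.Theory.
Set Implicit Arguments. Unset Strict Implicit. Unset Printing Implicit Defensive.

(* The proof specializes at roots of unity.  Let z be a primitive m-th root
   of unity and psi the ring morphism {mpoly int[n]} -> algC sending x_i to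
   -z^i for i < m and to 0 otherwise.  Since prod_i (t + psi x_i) =
   (t^m - 1) t^(n-m), psi(e_k) is 1, -1 or 0 according as k = 0, k = m or
   otherwise; hence psi(e_nu) vanishes for every partition nu of n except
   nu = (m^q), where it is (-1)^q.  Applying psi to an e-expansion of X_S
   (which exists by the fundamental theorem of symmetric polynomials) thus
   isolates the coefficient of e_(m^q) as (-1)^q psi(X_S).

   Up to the sign (-1)^n, psi(X_S) is the sum over proper colorings
   k : V -> Z/m of prod_v z^(k v).  Rooting S at its center, the change of
   variables "k |-> the color increments along the edges" turns properness
   into "nonzero increment off the root" and factors the sum into a product
   of geometric sums sum_c z^(c s_u), s_u the size of the subtree at u;
   these equal m at the root, and m-1 or -1 at other vertices according as
   m divides s_u or not.  A leg of length lam contains floor(lam/m) vertices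
   with m | s_u, and the connected partition forces
   sum_j floor(lam_j/m) = q-1, because every block avoiding the center lies
   inside a single leg. *)

Lemma card_ord_geq L k : #|[pred i : 'I_L | (k <= i)%N]| = L - k.
Proof.
rewrite -sum1_card big_mkcond /=.
elim: L => [|L IH]; first by rewrite big_ord0.
by rewrite big_ord_recr /= IH inE /=; case: ifP; lia.
Qed.

Lemma card_ord_ltn L k : #|[pred i : 'I_L | (i < k)%N]| = minn k L.
Proof.
rewrite -sum1_card big_mkcond /=.
elim: L => [|L IH]; first by rewrite big_ord0 minn0.
by rewrite big_ord_recr /= IH inE /=; case: ifP; lia.
Qed.

Lemma big_nth_pad (R : Type) (idx : R) (op : Monoid.com_law idx)
    (N : nat) (F : nat -> R) (s : seq nat) :
  (size s <= N)%N -> F 0%N = idx ->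
  \big[op/idx]_(i < N) F (nth 0%N s i) = \big[op/idx]_(x <- s) F x.
Proof.
move=> Hs HF0; rewrite (big_nth 0%N) big_mkord (big_ord_widen N (fun i => F (nth 0%N s i)) Hs).
rewrite [RHS]big_mkcond /=; apply: eq_bigr => i _.
by case: ifP => // /negbT; rewrite -leqNgt => Hi; rewrite nth_default.
Qed.

(* ** Existence of the e-expansion *)

(* A monomial x_1^(a_1) ... x_N^(a_N), read in the variables e_1, ..., e_N,
   stands for the partition with a_i parts equal to i.  [monomial_parts]
   lists these parts in nonincreasing order; [ipart_of_monomial] pads them
   with zeros into the encoding used by [is_ipart]. *)
Section MonomialPartition.
Variable N : nat.

Definition monomial_parts (mo : 'X_{1..N}) : seq nat :=
  sort geq (flatten [seq nseq (mo i) i.+1 | i <- enum 'I_N]).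

Definition ipart_of_monomial (mo : 'X_{1..N}) : {ffun 'I_N -> 'I_N.+1} :=
  [ffun i : 'I_N => inord (nth 0%N (monomial_parts mo) i)].

Lemma monomial_parts_perm mo :
  perm_eq (monomial_parts mo) (flatten [seq nseq (mo i) i.+1 | i <- enum 'I_N]).
Proof. by rewrite /monomial_parts perm_sort. Qed.

Lemma monomial_parts_range mo x : x \in monomial_parts mo -> (0 < x <= N)%N.
Proof.
rewrite (perm_mem (monomial_parts_perm mo)) => /flattenP [s /mapP [i _ ->]].
by move/nseqP => [-> _]; rewrite ltn_ord.
Qed.

Lemma sumn_monomial_parts mo : sumn (monomial_parts mo) = mnmwgt mo.
Proof.
rewrite (perm_sumn (monomial_parts_perm mo)) sumn_flatten -map_comp /mnmwgt.
rewrite sumnE big_map big_enum /=.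
by apply: eq_bigr => i _; rewrite sumn_nseq mulnC.
Qed.

Lemma size_monomial_parts mo : mnmwgt mo = N -> (size (monomial_parts mo) <= N)%N.
Proof.
move=> Hw; rewrite -Hw -sumn_monomial_parts.
have : all (fun x => 0 < x)%N (monomial_parts mo).
  by apply/allP => x /monomial_parts_range /andP[].
elim: (monomial_parts mo) => //= x s IH /andP[Hx Hs]; have := IH Hs; lia.
Qed.

Lemma ipart_of_monomialE mo i :
  nat_of_ord (ipart_of_monomial mo i) = nth 0%N (monomial_parts mo) i.
Proof.
rewrite ffunE /= inordK // ltnS.
case: (ltnP i (size (monomial_parts mo))) => Hi; last by rewrite nth_default.
by have /andP[] := monomial_parts_range (mem_nth 0%N Hi).
Qed.

Lemma ipart_of_monomialP mo : mnmwgt mo = N -> is_ipart (ipart_of_monomial mo).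
Proof.
move=> Hw; apply/andP; split.
- apply/forallP => i; apply/forallP => j; apply/implyP => Hij.
  rewrite !ipart_of_monomialE.
  case: (ltnP j (size (monomial_parts mo))) => Hj; last by rewrite (nth_default _ Hj).
  have Hsort : sorted geq (monomial_parts mo).
    by apply: sort_sorted => x y; exact: leq_total.
  have Htr : transitive geq by move=> x y w /= H1 H2; apply: leq_trans H2 H1.
  apply: (sorted_leq_nth Htr (fun x => leqnn x) 0%N Hsort) => //; rewrite inE; lia.
- under eq_bigr do rewrite ipart_of_monomialE.
  rewrite (@big_nth_pad _ _ (Monoid.Law.clone _ _ addn _) _ (fun x => x))
    ?size_monomial_parts //.
  by rewrite -sumnE sumn_monomial_parts Hw.
Qed.

Lemma e_basis_of_monomial mo : mnmwgt mo = N ->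
  e_basis (ipart_of_monomial mo) = (\prod_(i < N) mesym N int i.+1 ^+ mo i)%R.
Proof.
move=> Hw; rewrite /e_basis.
under eq_bigr do rewrite ipart_of_monomialE.
rewrite (@big_nth_pad _ _ (Monoid.ComLaw.clone _ _ *%R _) _ (fun x => mesym N int x))
  ?size_monomial_parts ?mesym0E //=.
rewrite (perm_big _ (monomial_parts_perm mo)) big_flatten big_map big_enum /=.
by apply: eq_bigr => i _; rewrite big_nseq iter_mulr mulr1.
Qed.

End MonomialPartition.

Lemma prod_dhomog1 (n : nat) (I : finType) (F : I -> {mpoly int[n]}) :
  (forall i, F i \is 1.-homog) -> (\prod_i F i)%R \is #|I|.-homog.
Proof.
move=> HF; rewrite -big_enum /= [#|I|]cardE.
elim: (enum I) => [|i r IH]; first by rewrite big_nil dhomog1.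
by rewrite big_cons; exact: (dhomogM (HF i) IH).
Qed.

Section EExpansion.
Variables (V : finType) (adj : rel V).
Local Notation N := #|V|.
Local Open Scope ring_scope.

(* X_G is symmetric: permuting the colors permutes the proper colorings. *)
Lemma chrom_sym_symmetric : chrom_sym adj \is symmetric.
Proof.
apply/issymP => s; rewrite /chrom_sym rmorph_sum /=.
under eq_bigr do rewrite rmorph_prod /=.
under eq_bigr do under eq_bigr do rewrite /msym mmapX mmap1U.
pose recolor (k : {ffun V -> 'I_N}) := [ffun v => s (k v)].
have recolor_inj : injective recolor.
  move=> k1 k2 E; apply/ffunP => v.
  have := congr1 (fun f : {ffun V -> 'I_N} => f v) E; rewrite !ffunE; exact: perm_inj.
rewrite [RHS](reindex_inj recolor_inj) /=; apply: eq_big => k.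
- apply/forallP/forallP => H x; apply/forallP => y; have := H x => /forallP /(_ y);
    by rewrite !ffunE (inj_eq perm_inj).
- by move=> _; apply: eq_bigr => v _; rewrite ffunE.
Qed.

Lemma chrom_sym_homog : chrom_sym adj \is N.-homog.
Proof.
apply: rpred_sum => k _; apply: prod_dhomog1 => v.
by rewrite dhomogX; apply/eqP; exact: mdeg1.
Qed.

(* Fundamental theorem of symmetric polynomials, grouped by partitions. *)
Lemma e_expansion_exists : exists a : {ffun 'I_N -> 'I_N.+1} -> int,
  chrom_sym adj = \sum_(nu | is_ipart nu) a nu *: e_basis nu.
Proof.
have [t [Ht /dhomogP Hw]] := sym_fundamental_homog chrom_sym_symmetric chrom_sym_homog.
exists (fun nu => \sum_(mo <- msupp t | ipart_of_monomial mo == nu) t@_mo).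
rewrite -Ht comp_mpolyEX big_seq_cond.
rewrite (partition_big (@ipart_of_monomial N) (@is_ipart N)) /=; last first.
  by move=> mo /andP[Hmo _]; apply: ipart_of_monomialP; exact: Hw.
apply: eq_bigr => nu Hnu; rewrite scaler_suml [RHS]big_seq_cond.
apply: eq_big => mo; first by rewrite andbT.
move=> /andP[/andP[Hmo _] /eqP <-]; congr (_ *: _).
rewrite comp_mpolyX e_basis_of_monomial; last exact: Hw.
by apply: eq_bigr => i _; rewrite tnth_mktuple.
Qed.

End EExpansion.

(* ** The partition (m^q) *)

Section PartitionMQ.
Variables (N m q : nat).
Hypotheses (m_gt0 : (0 < m)%N) (q_gt0 : (0 < q)%N) (N_eq : N = (m * q)%N).

Lemma part_mqE (i : 'I_N) :
  nat_of_ord (part_mq N m q i) = if (i < q)%N then m else 0%N.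
Proof. rewrite ffunE; case: ifP => // _; rewrite /= inordK //; nia. Qed.

Lemma part_mq_ipart : is_ipart (part_mq N m q).
Proof.
apply/andP; split.
- apply/forallP => i; apply/forallP => j; apply/implyP => Hij.
  by rewrite !part_mqE; case: ifP; case: ifP => //; lia.
- under eq_bigr do rewrite part_mqE.
  have Hqn : (q <= N)%N by nia.
  by rewrite -big_mkcond /= sum_nat_const card_ord_ltn (minn_idPl Hqn) N_eq mulnC.
Qed.

Lemma ipart_parts_0m_eq (nu : {ffun 'I_N -> 'I_N.+1}) : is_ipart nu ->
  (forall i, ((nu i : nat) == 0%N) || ((nu i : nat) == m)) -> nu = part_mq N m q.
Proof.
move=> /andP[/forallP nu_noninc /eqP nu_sum] nu_0m.
have nu_mono (i j : 'I_N) : (i <= j)%N -> (nu j <= nu i)%N.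
  by move=> Hij; have := nu_noninc i => /forallP /(_ j) /implyP /(_ Hij).
pose A := [pred i : 'I_N | (nu i : nat) == m].
have card_A : #|A| = q.
  have : (\sum_(i < N) (nu i : nat) = \sum_(i in A) m)%N.
    rewrite [RHS]big_mkcond /=; apply: eq_bigr => i _; rewrite inE.
    by case/orP: (nu_0m i) => /eqP ->; [rewrite eq_sym (gtn_eqF m_gt0)|rewrite eqxx].
  rewrite nu_sum sum_nat_const => E.
  have /eqP : (#|A| * m = q * m)%N by rewrite -E N_eq mulnC.
  by rewrite eqn_mul2r; case/orP => [/eqP|/eqP]; lia.
apply/ffunP => i; apply/val_inj => /=; rewrite part_mqE.
case/orP: (nu_0m i) => /eqP nu_i; rewrite nu_i.
- case: ifP => // Hiq.
  have : (#|A| <= minn i N)%N.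
    rewrite -card_ord_ltn; apply: subset_leq_card; apply/subsetP => j.
    rewrite !inE /= => /eqP Hj; rewrite ltnNge; apply/negP => Hij.
    have := nu_mono _ _ Hij; lia.
  lia.
- case: ifP => // Hiq.
  have : (minn i.+1 N <= #|A|)%N.
    rewrite -card_ord_ltn; apply: subset_leq_card; apply/subsetP => j.
    rewrite !inE /= => Hj.
    have := nu_mono j i ltac:(lia); case/orP: (nu_0m j) => /eqP -> //; lia.
  have := ltn_ord i; lia.
Qed.

End PartitionMQ.

(* ** Specialization at the m-th roots of unity *)

Local Open Scope ring_scope.

Section RootsOfUnity.
Variables (p : nat) (z : algC).
Hypothesis z_prim : (p.+1).-primitive_root z.

Definition zpow (c : 'I_p.+1) : algC := z ^+ c.

Lemma zpowD a b : zpow (a + b) = zpow a * zpow b.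
Proof. by rewrite /zpow /= prim_expr_mod // exprD. Qed.

(* Orthogonality of characters of Z/m: sum_c z^(c s) is m if m | s, else 0. *)
Lemma sum_zpowX s :
  \sum_(c : 'I_p.+1) zpow c ^+ s = if (p.+1 %| s)%N then (p.+1)%:R else 0.
Proof.
under eq_bigr do rewrite /zpow -exprM mulnC exprM.
have root_one : (z ^+ s) ^+ p.+1 = 1.
  by rewrite -exprM mulnC exprM (prim_expr_order z_prim) expr1n.
case: ifP => Hs.
- move: Hs; rewrite (prim_order_dvd z_prim) => /eqP ->.
  by under eq_bigr do rewrite expr1n; rewrite sumr_const card_ord.
- have Hne : z ^+ s - 1 != 0 by rewrite subr_eq0 -(prim_order_dvd z_prim) Hs.
  by apply: (mulfI Hne); rewrite mulr0 -subrX1 root_one subrr.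
Qed.

Definition nz_zsum (s : nat) : algC := if (p.+1 %| s)%N then p%:R else -1.

Lemma sum_nz_zpowX s : \sum_(c : 'I_p.+1 | c != 0) zpow c ^+ s = nz_zsum s.
Proof.
have := sum_zpowX s; rewrite (bigD1 0) //= {1}/zpow /= expr0 expr1n => H.
apply: (addrI 1); rewrite H /nz_zsum; case: ifP => _; last by rewrite subrr.
by rewrite -natr1 addrC.
Qed.

End RootsOfUnity.

(* Along a leg with L vertices the subtree sizes are L, L-1, ..., 1; exactly
   floor(L/m) of them are multiples of m. *)
Lemma prod_nz_zsum p L :
  \prod_(k < L) nz_zsum p (L - k) = p%:R ^+ (L %/ p.+1) * (-1) ^+ (L - L %/ p.+1).
Proof.
rewrite (reindex_inj rev_ord_inj) /=.
have -> : \prod_(k < L) nz_zsum p (L - rev_ord k) = \prod_(k < L) nz_zsum p k.+1.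
  by apply: eq_bigr => k _; congr nz_zsum; rewrite /=; have := ltn_ord k; lia.
elim: L => [|L IH]; first by rewrite big_ord0 div0n expr0 mulr1.
rewrite big_ord_recr /= IH (divnS _ (ltn0Sn p)) /nz_zsum.
have HL : (L %/ p.+1 <= L)%N by apply: leq_div.
case: ifP => /= H.
- by rewrite add1n subSS exprS mulrC mulrA.
- by rewrite add0n -mulrA -exprSr; congr (_ * _ ^+ _); lia.
Qed.

Section Specialization.
Variables (N p : nat) (z : algC).
Hypothesis z_prim : (p.+1).-primitive_root z.
Hypothesis m_le_N : (p.+1 <= N)%N.

Definition root_value (i : 'I_N) : algC := if (i < p.+1)%N then - z ^+ i else 0.

Definition psi (P : {mpoly int[N]}) : algC := mmap intr root_value P.
HB.instance Definition _ := GRing.RMorphism.copy psi (mmap intr root_value).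

Lemma psiZ c (P : {mpoly int[N]}) : psi (c *: P) = c%:~R * psi P.
Proof. by rewrite /psi mmapZ. Qed.

Lemma psi_mesym k :
  psi (mesym N int k) = \sum_(h : {set 'I_N} | #|h| == k) \prod_(i in h) root_value i.
Proof.
rewrite mesymE rmorph_sum /=; apply: eq_bigr => h _.
rewrite /psi mmapX /mmap1 [RHS]big_mkcond /=; apply: eq_bigr => i _.
by rewrite mnmE; case: (i \in h).
Qed.

(* Vieta: the coefficients of prod_i (t + y_i) are the e_k(y). *)
Lemma prod_root_value_vieta : \prod_(i < N) ('X + (root_value i)%:P) =
  \sum_(h : {set 'I_N}) (\prod_(i in h) root_value i) *: 'X^(N - #|h|).
Proof.
under eq_bigr do rewrite addrC.
rewrite [LHS](@bigA_distr {poly algC} 0 1 *%R +%R) /=.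
apply: eq_bigr => h _.
rewrite (bigID (fun i => i \in h)) /=.
rewrite (eq_bigr (fun i => (root_value i)%:P)); last by move=> i ->.
rewrite [X in _ * X](eq_bigr (fun i => 'X)); last by move=> i /negbTE ->.
rewrite prodr_const -rmorph_prod mul_polyC; congr (_ *: 'X^_).
have HC : (#|h| + #|~: h| = N)%N by rewrite cardsC card_ord.
have -> : (N - #|h| = #|~: h|)%N by lia.
by apply: eq_card => i; rewrite !inE.
Qed.

(* The specialized values are the roots of t^m - 1, plus n - m zeros. *)
Lemma prod_root_value : \prod_(i < N) ('X + (root_value i)%:P) =
  ('X^(p.+1) - 1) * 'X^(N - p.+1).
Proof.
rewrite (bigID (fun i : 'I_N => (i < p.+1)%N)) /=; congr (_ * _).
- rewrite (eq_bigr (fun i : 'I_N => 'X - (z ^+ i)%:P)); last first.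
    by move=> i Hi; rewrite /root_value Hi polyCN.
  rewrite -(big_ord_widen _ (fun i => 'X - (z ^+ i)%:P) m_le_N).
  by rewrite -(factor_Xn_sub_1 z_prim) big_mkord.
- rewrite (eq_bigr (fun i => 'X)); last first.
    by move=> i /negbTE Hi; rewrite /root_value Hi addr0.
  rewrite prodr_const -(card_ord_geq N p.+1); congr ('X ^+ _).
  by apply: eq_card => i; rewrite !inE /=; lia.
Qed.

(* Comparing coefficients: psi(e_k) = 1, -1, 0 for k = 0, k = m, otherwise. *)
Lemma psi_mesymE k : (k <= N)%N ->
  psi (mesym N int k) = if k == 0%N then 1 else if k == p.+1 then -1 else 0.
Proof.
move=> HkN.
have := congr1 (fun P : {poly algC} => P`_(N - k))
  (etrans (esym prod_root_value) prod_root_value_vieta).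
rewrite /= coef_sum mulrBl mul1r -exprD coefB !coefXn subnKC //.
under eq_bigr do rewrite coefZ coefXn mulr_natr mulrb.
rewrite -big_mkcond /= => coef_eq; rewrite psi_mesym.
have -> : \sum_(h : {set 'I_N} | #|h| == k) \prod_(i in h) root_value i =
          \sum_(h : {set 'I_N} | (N - k)%N == (N - #|h|)%N) \prod_(i in h) root_value i.
  apply: eq_bigl => h; have Hh : (#|h| <= N)%N by have := max_card h; rewrite card_ord.
  by apply/eqP/eqP; lia.
rewrite -coef_eq; have [->|Hk0] := eqVneq k 0%N.
  rewrite subn0 eqxx.
  have -> : (N == (N - p.+1)%N) = false by apply/negbTE/eqP; lia.
  by rewrite subr0.
have -> : ((N - k)%N == N) = false by apply/negbTE; apply/eqP; lia.
have [->|Hkp] := eqVneq k p.+1; first by rewrite eqxx sub0r.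
have -> : ((N - k)%N == (N - p.+1)%N) = false by apply/negbTE; apply/eqP; lia.
by rewrite subrr.
Qed.

Variable q : nat.
Hypotheses (q_gt0 : (0 < q)%N) (N_eq : N = (p.+1 * q)%N).

Lemma psi_e_basis nu : is_ipart nu ->
  psi (e_basis nu) = if nu == part_mq N p.+1 q then (-1) ^+ q else 0.
Proof.
move=> nu_ipart; rewrite /e_basis rmorph_prod /=.
case: eqP => [->|nu_neq].
- rewrite (eq_bigr (fun i : 'I_N => if (i < q)%N then -1 else 1)); last first.
    move=> i _; rewrite psi_mesymE; last by rewrite -ltnS.
    by rewrite part_mqE //; case: (i < q)%N; rewrite /= ?eqxx.
  rewrite -[LHS](big_mkcond (fun i : 'I_N => (i < q)%N)) /=.
  rewrite prodr_const card_ord_ltn; congr (_ ^+ _).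
  by apply/minn_idPl; rewrite N_eq; nia.
- have [i Hi] : exists i, ~~ ((nu i == 0 :> nat) || (nu i == p.+1 :> nat)).
    apply/existsP; rewrite -negb_forall; apply/negP => /forallP H; apply: nu_neq.
    exact: ipart_parts_0m_eq.
  rewrite (bigD1 i) //= psi_mesymE; last by rewrite -ltnS.
  by move: Hi; rewrite negb_or => /andP[/negbTE -> /negbTE ->]; rewrite mul0r.
Qed.

Lemma e_coeff_from_psi (X : {mpoly int[N]}) (a : {ffun 'I_N -> 'I_N.+1} -> int) :
  psi X = (-1) ^+ q * (p.+1)%:R * p%:R ^+ (q - 1) ->
  X = \sum_(nu | is_ipart nu) a nu *: e_basis nu ->
  a (part_mq N p.+1 q) = (p.+1 * p ^ (q - 1))%N%:Z.
Proof.
move=> psiX X_eq; move: psiX; rewrite X_eq rmorph_sum /=.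
under eq_bigr => nu Hnu do rewrite psiZ (psi_e_basis Hnu).
rewrite (bigD1 (part_mq N p.+1 q)) /=; last exact: part_mq_ipart.
rewrite eqxx big1 ?addr0; last by move=> nu /andP[_ /negbTE ->]; rewrite mulr0.
move=> H; apply/eqP; rewrite -(eqr_int algC); apply/eqP.
have sign_neq0 : (-1) ^+ q != 0 :> algC by rewrite signr_eq0.
by apply: (mulIf sign_neq0); rewrite H -pmulrn natrM natrX; ring.
Qed.

End Specialization.

(* ** The spider as a tree rooted at its center *)

Section SpiderTree.
Variables (d : nat) (lam : 'I_d -> nat).
Local Notation V := (spider_vert lam).

(* The parent of a vertex (the center is its own parent) and its depth. *)
Definition parent (v : V) : V :=
  match v with
  | None => None
  | Some (existT j k) => if val k == 0%N then None
      else Some (existT _ j (Ordinal (leq_ltn_trans (leq_pred k) (ltn_ord k))))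
  end.

Definition depth (v : V) : nat :=
  match v with None => 0%N | Some (existT _ k) => (val k).+1 end.

Lemma depth_parent v : v != None -> (depth (parent v) < depth v)%N.
Proof. by case: v => [[j k]|] //= _; case: ifP => /= [_|/eqP Hk]; lia. Qed.

Lemma depth_eq0 v : (depth v == 0%N) = (v == None).
Proof. by case: v => [[j k]|]. Qed.

Lemma spider_vert_eq j j' (a : 'I_(lam j)) (b : 'I_(lam j')) :
  (Some (existT _ j a) == Some (existT _ j' b) :> V) = (j == j') && (val a == val b).
Proof.
apply/eqP/andP => [E|[/eqP Ej /eqP Eab]].
- have Ej : j = j' by have := congr1 (fun v : V => if v is Some t then tag t else j) E.
  have Ed := congr1 depth E; simpl in Ed.
  by split; apply/eqP => //; case: Ed.
- by subst j'; congr (Some (existT _ _ _)); exact/val_inj.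
Qed.

Lemma spider_adj0_parent x y : spider_adj0 x y = (y != None) && (parent y == x).
Proof.
case: x => [[j k]|]; case: y => [[j' k']|] /=; try by [].
- case: ifP => [/eqP -> //|/eqP Hk]; first by rewrite andbF.
  rewrite spider_vert_eq /= eq_sym; apply/andP/andP => -[-> /eqP E]; split=> //; lia.
- by case: ifP.
Qed.

Lemma spider_adj_parent x y : spider_adj x y =
  ((y != None) && (parent y == x)) || ((x != None) && (parent x == y)).
Proof. by rewrite /spider_adj !spider_adj0_parent. Qed.

Lemma proper_coloring_parent (N : nat) (k : {ffun V -> 'I_N}) :
  proper_coloring (@spider_adj d lam) k =
  [forall v, (v != None) ==> (k v != k (parent v))].
Proof.
apply/forallP/forallP => H.
- move=> v; apply/implyP => Hv.
  have := H (parent v); move/forallP/(_ v)/implyP.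
  by rewrite spider_adj_parent Hv eqxx /= eq_sym; apply.
- move=> x; apply/forallP => y; apply/implyP; rewrite spider_adj_parent.
  case/orP => /andP[Hy /eqP <-].
  + by have := H y; rewrite Hy /= eq_sym.
  + by have := H x; rewrite Hy /=.
Qed.

Lemma big_spider (R : Type) (idx : R) (op : Monoid.com_law idx) (F : V -> R) :
  \big[op/idx]_(v : V) F v =
  op (F None) (\big[op/idx]_(j < d) \big[op/idx]_(k < lam j) F (Some (existT _ j k))).
Proof.
have -> : \big[op/idx]_(v : V) F v =
   \big[op/idx]_(v <- None :: map Some (enum {: {j : 'I_d & 'I_(lam j)}})) F v.
  rewrite [RHS]big_uniq /=; last first.
    rewrite map_inj_uniq ?enum_uniq ?andbT; last by move=> a b [].
    by apply/mapP => -[].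
  apply: eq_bigl => v; case: v => [t|] //=; rewrite inE /=.
  by rewrite (mem_map (fun a b (H : Some a = Some b) => ltac:(case: H => //))) mem_enum.
rewrite big_cons big_map big_enum /=; congr (op _ _).
rewrite (@sig_big_dep R idx op 'I_d (fun j => 'I_(lam j)) xpredT (fun j => xpredT)
   (fun j (k : 'I_(lam j)) => F (Some (existT _ j k)))) /=.
by apply: eq_big => // -[].
Qed.

Lemma card_spider : #|V| = (1 + \sum_(j < d) lam j)%N.
Proof.
rewrite -sum1_card (big_spider (Monoid.Law.clone _ _ addn _) (fun v => 1%N)) /=.
by congr (_ + _)%N; apply: eq_bigr => j _; rewrite sum1_card card_ord.
Qed.

Definition ancestor (u v : V) : bool :=
  match u, v with
  | None, _ => true
  | Some (existT j k), Some (existT j' k') => (j == j') && (val k <= val k')%N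
  | _, None => false
  end.

Lemma ancestor_refl v : ancestor v v.
Proof. by case: v => [[j k]|] //=; rewrite eqxx leqnn. Qed.

Lemma ancestor_depth u v : ancestor u v -> (depth u <= depth v)%N.
Proof. by case: u => [[j k]|]; case: v => [[j' k']|] //= /andP[_ H]. Qed.

Lemma ancestor_parent u v : v != None -> ancestor u v = (u == v) || ancestor u (parent v).
Proof.
case: v => [[j' k']|] // _; case: u => [[j k]|]; last by rewrite /= ?orbT.
rewrite /= spider_vert_eq; case: ifP => [/eqP Hk|/eqP Hk] /=.
- by rewrite Hk orbF; case: (j == j') => //=; lia.
- by case: (j == j') => //=; lia.
Qed.

Definition subtree_size (v : V) : nat :=
  if v is Some (existT j k) then (lam j - val k)%N else #|V|.

Lemma card_subtree u : #|[pred v | ancestor u v]| = subtree_size u.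
Proof.
case: u => [[j k]|] /=; last by apply: eq_card.
rewrite -sum1_card big_mkcond /= (big_spider (Monoid.Law.clone _ _ addn _)) /= add0n.
rewrite (bigD1 j) //= [X in (_ + X)%N]big1 ?addn0; last first.
  by move=> i /negbTE Hi; apply: big1 => k' _; rewrite inE /= eq_sym Hi.
under eq_bigr do rewrite inE /= eqxx /=.
by rewrite -big_mkcond /= sum1_card card_ord_geq.
Qed.

End SpiderTree.

(* ** The specialized chromatic symmetric function of a spider *)

Section ColoringSum.
Variables (d : nat) (lam : 'I_d -> nat).
Local Notation V := (spider_vert lam).
Variables (p : nat) (z : algC).
Hypothesis z_prim : (p.+1).-primitive_root z.

Definition increments (k : {ffun V -> 'I_p.+1}) : {ffun V -> 'I_p.+1} :=
  [ffun v => if v == None then k v else k v - k (parent v)].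

Lemma incrementsE (k : {ffun V -> 'I_p.+1}) v :
  v != None -> k v = increments k v + k (parent v).
Proof. by move=> Hv; rewrite ffunE (negbTE Hv) subrK. Qed.

Lemma increments_inj : injective increments.
Proof.
move=> k1 k2 E; apply/ffunP.
have at_center : k1 None = k2 None.
  by have := congr1 (fun f : {ffun V -> 'I_p.+1} => f None) E; rewrite !ffunE.
suff H n v : (depth v <= n)%N -> k1 v = k2 v by move=> v; exact: (H _ v (leqnn _)).
elim: n v => [|n IH] v Hv.
- by have /eqP -> : v == None by rewrite -depth_eq0; lia.
- have [->|Hn] := eqVneq v None; first exact: at_center.
  rewrite (incrementsE k1 Hn) (incrementsE k2 Hn) E IH //.
  by have := depth_parent Hn; lia.
Qed.

Lemma zpow_ancestors (k : {ffun V -> 'I_p.+1}) v :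
  zpow z (k v) = \prod_(u | ancestor u v) zpow z (increments k u).
Proof.
move: {2}(depth v) (leqnn (depth v)) => n; elim: n v => [|n IH] v Hv.
- have /eqP -> : v == None by rewrite -depth_eq0; lia.
  by rewrite (big_pred1 None) ?ffunE //= => -[[j k']|].
- have [->|Hn] := eqVneq v None.
    by rewrite (big_pred1 None) ?ffunE //= => -[[j k']|].
  rewrite (incrementsE k Hn) (zpowD z_prim) (IH (parent v)); last by have := depth_parent Hn; lia.
  rewrite [RHS](bigD1 v) /=; last exact: ancestor_refl.
  congr (_ * _); apply: eq_bigl => u.
  rewrite (ancestor_parent _ Hn); have [->|] := eqVneq u v => //=.
  + apply/negbTE/negP => /ancestor_depth; have := depth_parent Hn; lia.
  + by rewrite andbT.
Qed.

(* Exchanging the products: each increment is counted once per vertex of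
   its subtree. *)
Lemma prod_zpow_increments (k : {ffun V -> 'I_p.+1}) :
  \prod_v zpow z (k v) = \prod_u zpow z (increments k u) ^+ subtree_size u.
Proof.
under eq_bigr do rewrite zpow_ancestors.
rewrite (exchange_big_dep xpredT) //=.
by apply: eq_bigr => u _; rewrite prodr_const -card_subtree.
Qed.

(* Summing over proper colorings = summing over increments that are nonzero
   off the center, which factors over the vertices. *)
Lemma sum_proper_zpow :
  \sum_(k : {ffun V -> 'I_p.+1} | proper_coloring (@spider_adj d lam) k)
     \prod_v zpow z (k v)
  = \prod_(u : V) \sum_(c : 'I_p.+1 | (u == None) || (c != 0)) zpow z c ^+ subtree_size u.
Proof.
rewrite bigA_distr_big_dep /= [RHS](reindex_inj increments_inj) /=.
apply: eq_big => [k|k _]; last exact: prod_zpow_increments.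
rewrite proper_coloring_parent; apply/forallP/familyP => H v; have := H v;
  by rewrite unfold_in /= ffunE; have [->|Hv] := eqVneq v None => //=; rewrite subr_eq0.
Qed.

Lemma prod_geometric_sums : (p.+1 %| #|V|)%N ->
  \prod_(u : V) \sum_(c : 'I_p.+1 | (u == None) || (c != 0)) zpow z c ^+ subtree_size u
  = (p.+1)%:R * p%:R ^+ (\sum_(j < d) (lam j %/ p.+1))
       * (-1) ^+ (\sum_(j < d) (lam j - lam j %/ p.+1)).
Proof.
move=> m_dvd_V.
rewrite (big_spider (Monoid.ComLaw.clone _ _ *%R _)) /=.
rewrite (sum_zpowX z_prim) m_dvd_V -mulrA; congr (_ * _).
rewrite -!prodrXr -big_split /=; apply: eq_bigr => j _.
by rewrite -prod_nz_zsum; apply: eq_bigr => k _; rewrite (sum_nz_zpowX z_prim).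
Qed.

End ColoringSum.

(* Under psi only colors below m contribute; these are colorings with
   values in Z/m, each vertex contributing -z^(k v). *)
Lemma psi_chrom_sym_colorings (V : finType) (adj : rel V) (p : nat) (z : algC)
    (m_le_V : (p.+1 <= #|V|)%N) :
  psi p z (chrom_sym adj) =
  \sum_(k : {ffun V -> 'I_p.+1} | proper_coloring adj k) \prod_v (- zpow z (k v)).
Proof.
rewrite /chrom_sym rmorph_sum /=.
under eq_bigr do rewrite rmorph_prod /=.
under eq_bigr do under eq_bigr do rewrite /psi mmapX mmap1U.
pose small (k : {ffun V -> 'I_#|V|}) := [forall v, (k v < p.+1)%N].
rewrite (bigID small) /= [X in _ + X]big1 ?addr0; last first.
  move=> k /andP[_ /forallPn [v Hv]]; rewrite (bigD1 v) //= /root_value.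
  by rewrite (negbTE Hv) mul0r.
pose widen (k : {ffun V -> 'I_p.+1}) : {ffun V -> 'I_#|V|} :=
  [ffun v => widen_ord m_le_V (k v)].
pose shrink (k : {ffun V -> 'I_#|V|}) : {ffun V -> 'I_p.+1} := [ffun v => inord (k v)].
rewrite (reindex widen) /=; last first.
  exists shrink => k; rewrite inE.
  - by move=> _; apply/ffunP => v; rewrite !ffunE; apply/val_inj; rewrite /= inordK.
  - move=> /andP[_ /forallP Hs]; apply/ffunP => v; rewrite !ffunE.
    by apply/val_inj; rewrite /= inordK //; exact: Hs.
apply: eq_big => [k|k _].
- have -> : small (widen k) by apply/forallP => v; rewrite ffunE /=.
  rewrite andbT; apply/forallP/forallP => H x; apply/forallP => y;
    by have := H x => /forallP /(_ y); rewrite !ffunE.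
- by apply: eq_bigr => v _; rewrite ffunE /root_value /= ltn_ord.
Qed.

Lemma psi_chrom_sym_spider (d : nat) (lam : 'I_d -> nat) (p q : nat) (z : algC) :
  (p.+1).-primitive_root z -> (0 < q)%N ->
  (1 + \sum_(j < d) lam j = p.+1 * q)%N ->
  (\sum_(j < d) (lam j %/ p.+1) = q - 1)%N ->
  psi p z (chrom_sym (@spider_adj d lam)) = (-1) ^+ q * (p.+1)%:R * p%:R ^+ (q - 1).
Proof.
move=> z_prim q_gt0 n_eq legs_eq.
have card_V : #|spider_vert lam| = (p.+1 * q)%N by rewrite card_spider.
have m_le_V : (p.+1 <= #|spider_vert lam|)%N by rewrite card_V; nia.
rewrite (psi_chrom_sym_colorings _ _ m_le_V).
under eq_bigr do rewrite prodrN.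
rewrite -mulr_sumr sum_proper_zpow // prod_geometric_sums //; last first.
  by rewrite card_V dvdn_mulr.
rewrite legs_eq cardE -cardE card_V.
have off_center : (\sum_(j < d) (lam j - lam j %/ p.+1) = p.+1 * q - 1 - (q - 1))%N.
  have : (\sum_(j < d) (lam j - lam j %/ p.+1) + \sum_(j < d) (lam j %/ p.+1)
          = \sum_(j < d) lam j)%N.
    by rewrite -big_split /=; apply: eq_bigr => j _; rewrite subnK // leq_div.
  lia.
have sign : (-1) ^+ (p.+1 * q) * (-1) ^+ (p.+1 * q - 1 - (q - 1)) = (-1) ^+ q :> algC.
  rewrite -exprD -signr_odd.
  have -> : (p.+1 * q + (p.+1 * q - 1 - (q - 1)) = (p * q).*2 + q)%N by rewrite -addnn; nia.
  by rewrite oddD odd_double /= signr_odd.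
by rewrite off_center -sign; ring.
Qed.

Local Close Scope ring_scope.

(* ** Connected partitions of spiders *)

Section Legs.
Variables (d : nat) (lam : 'I_d -> nat).
Local Notation V := (spider_vert lam).

Definition leg_of (v : V) : option 'I_d := if v is Some t then Some (tag t) else None.

Definition leg (j : 'I_d) : {set V} := [set v | leg_of v == Some j].

Lemma card_leg j : #|leg j| = lam j.
Proof.
rewrite -sum1_card big_mkcond /= (big_spider (Monoid.Law.clone _ _ addn _)) /= inE /= add0n.
rewrite (bigD1 j) //= [X in (_ + X)%N]big1 ?addn0; last first.
  by move=> i /negbTE Hi; apply: big1 => k' _; rewrite inE /= (inj_eq Some_inj) Hi.
under eq_bigr do rewrite inE /= eqxx.
by rewrite sum_nat_const card_ord muln1.
Qed.

Lemma spider_adj_leg u v : spider_adj u v -> u != None -> v != None -> leg_of u = leg_of v.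
Proof.
have leg_of_parent w : parent w != None -> leg_of (parent w) = leg_of w.
  by case: w => [[j k]|] //=; case: ifP.
by rewrite spider_adj_parent => /orP[] /andP[_ /eqP <-] Hu Hv; rewrite leg_of_parent.
Qed.

Variables (m q : nat) (P : {set {set V}}).
Hypothesis P_conn : connected_partition_of_type_mq (@spider_adj d lam) m q P.
Hypothesis m_gt0 : (0 < m)%N.

Lemma block_in_leg B : B \in P -> None \notin B -> exists j, B \subset leg j.
Proof.
case: P_conn => _ conn card_B _ BP centerNB.
have /card_gt0P [x0 Hx0] : (0 < #|B|)%N by rewrite card_B.
case Ex0 : x0 => [t0|]; last by rewrite -Ex0 Hx0 in centerNB.
exists (tag t0); apply/subsetP => y Hy.
have := conn B BP => /forallP /(_ x0) /implyP /(_ Hx0) /forallP /(_ y) /implyP /(_ Hy).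
have leg_closed : closed [rel u v | [&& spider_adj u v, u \in B & v \in B]] (leg (tag t0)).
  move=> u v /= /and3P[Huv Hu Hv]; rewrite !inE (spider_adj_leg Huv) //.
  - by apply: contraNneq centerNB => <-.
  - by apply: contraNneq centerNB => <-.
by move/(closed_connect leg_closed) <-; rewrite Ex0 inE.
Qed.

Definition leg_blocks (j : 'I_d) : {set {set V}} := [set B in P | B \subset leg j].

(* They are disjoint blocks of size m in a set of size lam j. *)
Lemma card_leg_blocks j : (#|leg_blocks j| * m <= lam j)%N.
Proof.
case: P_conn => /and3P[_ P_triv _] _ card_B _.
rewrite -card_leg.
have Hpart : partition (leg_blocks j) (cover (leg_blocks j)).
  apply/and3P; split => //.
  - by apply: trivIsetS P_triv; apply/subsetP => B; rewrite inE => /andP[].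
  - by apply/negP; rewrite inE => /andP[/card_B]; rewrite cards0 => E; lia.
rewrite -(card_uniform_partition _ Hpart); last first.
  by move=> B; rewrite inE => /andP[/card_B].
by apply: subset_leq_card; apply/bigcupsP => B; rewrite inE => /andP[].
Qed.

(* All q - 1 blocks other than the one containing the center lie in legs. *)
Lemma card_blocks_off_center : (q - 1 <= \sum_(j < d) #|leg_blocks j|)%N.
Proof.
case: (P_conn) => P_part _ _ card_P.
have P_triv : trivIset P by case/and3P: P_part.
pose B0 := pblock P None.
have B0P : B0 \in P by apply: pblock_mem; rewrite (cover_partition P_part) inE.
have -> : (q - 1 = #|P :\ B0|)%N by rewrite -card_P (cardsD1 B0 P) B0P /= addKn.
rewrite -sum1_card.
apply: (@leq_trans (\sum_(B in P :\ B0) \sum_(j < d) (B \subset leg j))).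
  apply: leq_sum => B; rewrite !inE => /andP[B_neq BP].
  have centerNB : None \notin B.
    apply: contra B_neq => centerB; apply/eqP.
    by rewrite /B0 (def_pblock P_triv BP centerB).
  have [j Hj] := block_in_leg BP centerNB.
  by rewrite (bigD1 j) //= Hj.
rewrite exchange_big /=; apply: leq_sum => j _.
rewrite -sum1_card [X in (_ <= X)%N]big_mkcond /= [X in (X <= _)%N]big_mkcond /=.
apply: leq_sum => B _; rewrite !inE.
by case: (B \subset leg j); case: (B \in P); case: (B != B0).
Qed.

Lemma sum_legs_div : (1 + \sum_(j < d) lam j = m * q)%N ->
  (\sum_(j < d) (lam j %/ m) = q - 1)%N.
Proof.
move=> n_eq.
have upper : (m * \sum_(j < d) (lam j %/ m) <= \sum_(j < d) lam j)%N.
  by rewrite big_distrr /=; apply: leq_sum => j _; rewrite mulnC leq_divM.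
have lower : (q - 1 <= \sum_(j < d) (lam j %/ m))%N.
  apply: (leq_trans card_blocks_off_center); apply: leq_sum => j _.
  by rewrite leq_divRL // card_leg_blocks.
nia.
Qed.

End Legs.

Theorem lemma5p1 (d : nat) (lam : 'I_d -> nat) (m q : nat) :
  (forall j, 0 < lam j)%N ->
  (0 < q)%N -> (1 < m)%N ->
  (1 + \sum_(j < d) lam j = m * q)%N ->
  (exists P : {set {set spider_vert lam}},
      connected_partition_of_type_mq (@spider_adj d lam) m q P) ->
  e_coeff_is (chrom_sym (@spider_adj d lam)) (part_mq #|spider_vert lam| m q)
    ((m * (m - 1) ^ (q - 1))%N%:Z).
Proof.
move=> _ q_gt0 m_gt1 n_eq [P P_conn].
case: m m_gt1 n_eq P_conn => // p _ n_eq P_conn; rewrite subSS subn0.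
have [z z_prim] := C_prim_root_exists (ltn0Sn p).
have legs_eq := sum_legs_div P_conn (ltn0Sn p) n_eq.
have card_V : #|spider_vert lam| = (p.+1 * q)%N by rewrite card_spider.
have m_le_V : (p.+1 <= #|spider_vert lam|)%N by rewrite card_V; nia.
split; first exact: e_expansion_exists.
move=> a expansion.
exact: (e_coeff_from_psi z_prim m_le_V q_gt0 card_V
          (psi_chrom_sym_spider z_prim q_gt0 n_eq legs_eq) expansion).
Qed.
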